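(* Every pairwise social choice correspondence that satisfies strategyproofness, non-imposition, homogeneity, and neutrality is strongly Condorcet-consistent.
   Context: Let $A$ be a finite set of alternatives; a preference profile $R$ assigns a strict total order $\succ_i$ on $A$ to each voter $i$ of a finite non-empty electorate $N\subseteq\{1,2,\dots\}$; $\mathcal{R}^*(A)$ is the set of all profiles over all electorates. $g_R(x,y)=|\{i: x\succ_i y\}|-|\{i: y\succ_i x\}|$; $x\succ_R y$ iff $g_R(x,y)>0$. A Condorcet winner is $x$ with $x\succ_R y$ for all $y\ne x$. An SCC is $f:\mathcal{R}^*(A)\to 2^A\setminus\{\emptyset\}$; pairwise: $f(R)=f(R')$ whenever $g_R=g_{R'}$; non-imposing: for every $x\in A$ some profile has $f(R)=\{x\}$; neutral: for profiles $R,R'$ on the same electorate and a permutation $\pi$ of $A$ with $x\succ_i y\iff\pi(x)\succ'_i\pi(y)$ for all $x,y,i$, $f(R')=\pi(f(R))$; homogeneous: $f(kR)=f(R)$ for $k$ copies $kR$ of $R$; strongly Condorcet-consistent: $f(R)=\{x\}$ iff $x$ is the Condorcet winner in $R$. Fishburn's extension: for $X\ne Y$, $X\succ_i^F Y$ iff $x\succ_i y$ for all $x\in X\setminus Y,y\in Y$ and for all $x\in X,y\in Y\setminus X$; $f$ is strategyproof if no voter $i$ can change only his own preference to move from $R$ to $R'$ with $f(R')\succ_i^F f(R)$. *)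

From mathcomp Require Import all_boot all_order all_algebra all_fingroup.
Set Implicit Arguments. Unset Strict Implicit. Unset Printing Implicit Defensive.
Import Order.TTheory GRing.Theory Num.Theory.

Section Defs.
Variable A : finType.

Record pref := Pref {
  prel :> rel A;
  pref_irr : forall x, ~~ prel x x;
  pref_trans : forall x y z, prel x y -> prel y z -> prel x z;
  pref_total : forall x y, x != y -> prel x y || prel y x }.

(* A profile: a finite non-empty electorate N of positive naturals (listed
   without repetition) and a preference for each voter.  Values of [prefs]
   outside [voters] are irrelevant junk. *)
Record profile := Profile {
  voters : seq nat;
  voters_uniq : uniq voters;
  voters_pos : 0 \notin voters;
  voters_nonempty : voters != [::];
  prefs : nat -> pref }.

Definition same_pref (p q : pref) : Prop := forall x y, p x y = q x y.

Definition margin (R : profile) (x y : A) : int :=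
  \sum_(i <- voters R) ((prefs R i x y)%:Z - (prefs R i y x)%:Z).

Definition condorcet_winner (R : profile) (x : A) : Prop :=
  forall y, y != x -> (0 < margin R x y)%R.

Definition SCC := profile -> {set A}.

Definition is_SCC (f : SCC) : Prop := forall R, f R != set0.

Definition pairwise_scc (f : SCC) : Prop :=
  forall R R', (forall x y, margin R x y = margin R' x y) -> f R = f R'.

Definition non_imposing (f : SCC) : Prop :=
  forall x, exists R, f R = [set x].

Definition neutral (f : SCC) : Prop :=
  forall (R R' : profile) (pi : {perm A}),
    voters R = voters R' ->
    (forall i, i \in voters R -> forall x y, prefs R i x y = prefs R' i (pi x) (pi y)) ->
    f R' = pi @: f R.

(* R2 consists of k copies of R: phi sends each voter of R2 to the voter of R
   it copies, every voter of R has exactly k copies, with the same preference. *)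
Definition copies (k : nat) (R R2 : profile) : Prop :=
  exists phi : nat -> nat,
    [/\ forall j, j \in voters R2 -> phi j \in voters R,
        forall i, i \in voters R -> count (fun j => phi j == i) (voters R2) = k &
        forall j, j \in voters R2 -> same_pref (prefs R2 j) (prefs R (phi j))].

Definition homogeneous (f : SCC) : Prop :=
  forall k R R2, 0 < k -> copies k R R2 -> f R2 = f R.

Definition fishburn (p : pref) (X Y : {set A}) : Prop :=
  X != Y /\
  (forall x y, x \in X :\: Y -> y \in Y -> p x y) /\
  (forall x y, x \in X -> y \in Y :\: X -> p x y).

Definition strategyproof (f : SCC) : Prop :=
  forall (R R' : profile) (i : nat),
    voters R = voters R' -> i \in voters R ->
    (forall j, j \in voters R -> j != i -> same_pref (prefs R j) (prefs R' j)) ->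
    ~ fishburn (prefs R i) (f R') (f R).

Definition strongly_condorcet_consistent (f : SCC) : Prop :=
  forall R x, f R = [set x] <-> condorcet_winner R x.

End Defs.

(* Let f be pairwise and strategyproof with f P = {x}.  Adding to P a voter with a
   preference s (x on top, a immediately above b) and a voter with the reverse of s
   changes no margin, so f still elects {x}; the second voter ranks x last, hence by
   strategyproofness f stays {x} when he swaps a and b, which raises the margin of a
   over b by 2.  Every antisymmetric h whose row x is nonnegative is a sum of such
   arcs (a, b) with b <> x, so after doubling P (homogeneity, to fix the parity of the
   margins) f elects {x} at every profile with margins 2 (g_P + h).
   If f R = {x} but x does not beat y, some such h makes the margins symmetric in x
   and y, and neutrality forces f to treat x and y alike.  If x is the Condorcet
   winner of R, the margins of a large multiple of R are reached this way from a
   profile electing {x}, which exists by non-imposition. *)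

From mathcomp Require Import all_boot all_order all_algebra all_fingroup.
From mathcomp Require Import zify.
Set Implicit Arguments. Unset Strict Implicit. Unset Printing Implicit Defensive.
Import Order.TTheory GRing.Theory Num.Theory.

Section Preferences.
Variable A : finType.
Implicit Types (p : pref A) (u v w : A).

Lemma pref_asym p u v : p u v -> ~~ p v u.
Proof. by move=> puv; apply/negP => /(pref_trans puv); apply/negP/pref_irr. Qed.

Section Rank.
Variables (r : A -> nat) (r_inj : injective r).

Lemma rank_irr u : ~~ (r u < r u). Proof. by rewrite ltnn. Qed.
Lemma rank_trans u v w : r u < r v -> r v < r w -> r u < r w.
Proof. exact: ltn_trans. Qed.
Lemma rank_total u v : u != v -> (r u < r v) || (r v < r u).
Proof. by rewrite -neq_ltn; apply: contra => /eqP/r_inj ->. Qed.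

Definition rank_pref : pref A :=
  @Pref A (fun u v => r u < r v) rank_irr rank_trans rank_total.
End Rank.

Section Reverse.
Variable p : pref A.

Lemma rev_irr u : ~~ p u u. Proof. exact: pref_irr. Qed.
Lemma rev_trans u v w : p v u -> p w v -> p w u.
Proof. by move=> puv pvw; apply: pref_trans pvw puv. Qed.
Lemma rev_total u v : u != v -> p v u || p u v.
Proof. by rewrite orbC; apply: pref_total. Qed.

Definition rev_pref : pref A :=
  @Pref A (fun u v => p v u) rev_irr rev_trans rev_total.
End Reverse.

Section Relabel.
Variables (p : pref A) (g : A -> A) (g_inj : injective g).

Lemma relabel_irr u : ~~ p (g u) (g u). Proof. exact: pref_irr. Qed.
Lemma relabel_trans u v w : p (g u) (g v) -> p (g v) (g w) -> p (g u) (g w).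
Proof. exact: pref_trans. Qed.
Lemma relabel_total u v : u != v -> p (g u) (g v) || p (g v) (g u).
Proof. by move=> uv; apply: pref_total; rewrite (inj_eq g_inj). Qed.

Definition relabel_pref : pref A :=
  @Pref A (fun u v => p (g u) (g v)) relabel_irr relabel_trans relabel_total.
End Relabel.

Definition adjacent p a b := p a b /\ forall w, p a w -> ~~ p w b.

Section TopPref.
Variables x a b : A.

Definition top_rank u :=
  if u == x then 0 else if u == a then 1 else if u == b then 2 else (enum_rank u).+3.

Lemma top_rank_inj : injective top_rank.
Proof.
move=> u v; rewrite /top_rank.
by repeat case: ifP => [/eqP ->|_]; move=> // [/ord_inj/enum_rank_inj].
Qed.

Definition top_pref := rank_pref top_rank_inj.

Lemma top_pref_top w : w != x -> top_pref x w.
Proof. by move=> wx; rewrite /= /top_rank eqxx (negbTE wx); do 2?case: ifP. Qed.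

Lemma top_pref_adjacent : a != b -> b != x -> adjacent top_pref a b.
Proof.
move=> ab bx; rewrite /adjacent /= /top_rank (negbTE bx) [b == a]eq_sym (negbTE ab) !eqxx.
split=> [|w]; first by case: ifP.
case: (eqVneq w x) => [//|wx].
case: (eqVneq w a) => [wa|_]; first by rewrite -wa (negbTE wx).
by do 2!case: ifP.
Qed.
End TopPref.

Local Open Scope ring_scope.

Definition vote p u v : int := (p u v)%:Z - (p v u)%:Z.

Lemma voteN p u v : vote p v u = - vote p u v.
Proof. by rewrite /vote opprB. Qed.

Lemma vote_rev p u v : vote (rev_pref p) u v = - vote p u v.
Proof. exact: voteN. Qed.

Lemma vote_relabel p g (g_inj : injective g) u v :
  vote (relabel_pref p g_inj) u v = vote p (g u) (g v).
Proof. by []. Qed.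

Lemma vote_le1 p u v : vote p u v <= 1.
Proof. by rewrite /vote; case: (p u v); case: (p v u). Qed.

Lemma margin_vote (R : profile A) u v :
  margin R u v = \sum_(i <- voters R) vote (prefs R i) u v.
Proof. by []. Qed.

Lemma margin_antisym (R : profile A) u v : margin R v u = - margin R u v.
Proof. by rewrite !margin_vote -sumrN; apply: eq_bigr => i _; apply: voteN. Qed.

Lemma margin_xx (R : profile A) u : margin R u u = 0.
Proof. by have := margin_antisym R u u; lia. Qed.

Lemma margin_le_size (R : profile A) u v : margin R u v <= (size (voters R))%:Z.
Proof.
rewrite margin_vote; elim: (voters R) => [|i s IH]; first by rewrite big_nil.
by rewrite big_cons /= -add1n PoszD lerD ?vote_le1.
Qed.

Definition arc_margin (e : A * A) u v : int :=
  (e == (u, v))%:R - (e == (v, u))%:R.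

Lemma vote_adjacent p a b w :
  adjacent p a b -> w != a -> w != b -> vote p a w = vote p b w.
Proof.
move=> [pab between] wa wb.
have abw : p a w = p b w.
  apply/idP/idP => [paw | pbw]; last exact: pref_trans pab pbw.
  by case/orP: (pref_total p wb) => // pwb; move: (between w paw); rewrite pwb.
have wab : p w a = p w b.
  apply/idP/idP => [pwa | pwb]; first exact: pref_trans pwa pab.
  by case/orP: (pref_total p wa) => // paw; move: (between w paw); rewrite pwb.
by rewrite /vote abw wab.
Qed.

Lemma vote_swap_adjacent p a b u v : adjacent p a b -> a != b ->
  vote p u v - vote (relabel_pref p (@perm_inj _ (tperm a b))) u v
  = arc_margin (a, b) u v *+ 2.
Proof.
move=> adj ab; have [pab _] := adj; have ba : b != a by rewrite eq_sym.
have vab : vote p a b = 1 by rewrite /vote pab (negbTE (pref_asym pab)).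
have vba : vote p b a = -1 by rewrite voteN vab.
have vxx w : vote p w w = 0 by rewrite /vote subrr.
rewrite vote_relabel /arc_margin !xpair_eqE.
case: tpermP => [->|->|/nesym/eqP au /nesym/eqP bu];
  case: tpermP => [->|->|/nesym/eqP av /nesym/eqP bv];
  rewrite ?eqxx ?vxx ?vab ?vba ?(negbTE ab) ?(negbTE ba) ?(negbTE au) ?(negbTE bu)
    ?(negbTE av) ?(negbTE bv) ?andbF ?subrr //=.
all: by rewrite ?(voteN p _ u) (vote_adjacent adj) ?subrr ?mul0rn // eq_sym.
Qed.

End Preferences.

Section Profiles.
Variable A : finType.
Implicit Types (R : profile A) (u v : A).
Local Open Scope ring_scope.

Section AddVoter.
Variables (R : profile A) (p : pref A).

Definition fresh_voter := (\max_(i <- voters R) i).+1.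

Lemma fresh_voter_notin : fresh_voter \notin voters R.
Proof.
by apply/negP => /(leq_bigmax_seq (P := predT) (F := id))/(_ isT); rewrite ltnn.
Qed.

Lemma add_voter_uniq : uniq (fresh_voter :: voters R).
Proof. by rewrite /= fresh_voter_notin voters_uniq. Qed.

Lemma add_voter_pos : 0 \notin fresh_voter :: voters R.
Proof. by rewrite in_cons voters_pos. Qed.

Definition add_voter : profile A :=
  @Profile A _ add_voter_uniq add_voter_pos isT
    (fun j => if j == fresh_voter then p else prefs R j).

Lemma margin_add_voter u v : margin add_voter u v = vote p u v + margin R u v.
Proof.
rewrite !margin_vote big_cons /= eqxx; congr (_ + _).
apply: eq_big_seq => j jR; case: eqP jR => // ->.
by rewrite (negbTE fresh_voter_notin).
Qed.
End AddVoter.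

Section Double.
Variable R : profile A.

Definition double_voters := map double (voters R) ++ map (fun i => i.*2.+1) (voters R).

Lemma double_voters_uniq : uniq double_voters.
Proof.
rewrite cat_uniq !map_inj_uniq ?voters_uniq /=; last exact: double_inj;
  last by move=> i j [] /double_inj.
rewrite andbT; apply/hasPn => _ /mapP [i _ ->]; apply/mapP => [[j _]].
by move/(congr1 odd); rewrite /= !odd_double.
Qed.

Lemma double_voters_pos : 0 \notin double_voters.
Proof.
rewrite mem_cat negb_or; apply/andP; split; apply/mapP => [[i iR]] //.
move/esym/eqP; rewrite double_eq0 => /eqP i0.
by move: iR; rewrite i0 (negbTE (voters_pos R)).
Qed.

Lemma double_voters_nonempty : double_voters != [::].
Proof. by rewrite /double_voters; case: (voters R) (voters_nonempty R). Qed.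

Definition double_profile : profile A :=
  @Profile A _ double_voters_uniq double_voters_pos double_voters_nonempty
    (fun j => prefs R j./2).

Lemma double_profile_copies : copies 2 R double_profile.
Proof.
exists half; split.
- by move=> j; rewrite mem_cat => /orP[] /mapP [i iR ->]; rewrite /= ?doubleK ?uphalf_double.
- move=> i iR; rewrite count_cat !count_map.
  rewrite (@eq_count _ _ (pred1 i)) => [|j /=]; last by rewrite doubleK.
  rewrite (@eq_count _ (preim _ _) (pred1 i)) => [|j /=]; last by rewrite uphalf_double.
  by rewrite count_uniq_mem ?voters_uniq // iR.
- by [].
Qed.

Lemma margin_double u v : margin double_profile u v = margin R u v *+ 2.
Proof.
rewrite !margin_vote big_cat !big_map mulr2n.
by congr (_ + _); apply: eq_bigr => i _; rewrite /= ?doubleK ?uphalf_double.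
Qed.
End Double.

Lemma margin_iter_double n R u v :
  margin (iter n double_profile R) u v = margin R u v *+ 2 ^ n.
Proof.
by elim: n => [|n IH]; rewrite ?expn0 ?mulr1n // iterS margin_double IH -mulrnA expnSr.
Qed.

Definition relabel_profile R (pi : {perm A}) : profile A :=
  @Profile A _ (voters_uniq R) (voters_pos R) (voters_nonempty R)
    (fun i => relabel_pref (prefs R i) (@perm_inj _ pi)).

Lemma margin_relabel R pi u v :
  margin (relabel_profile R pi) u v = margin R (pi u) (pi v).
Proof. by []. Qed.

End Profiles.

Section Decomposition.
Variable A : finType.
Local Open Scope ring_scope.

Lemma sum_arc_margin (m : A * A -> nat) u v :
  \sum_(e : A * A) arc_margin e u v *+ m e = (m (u, v))%:Z - (m (v, u))%:Z.
Proof.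
have sum_pick (q : A * A) : \sum_(e : A * A) (e == q)%:R *+ m e = (m q)%:Z.
  rewrite (bigD1 q) //= eqxx big1 ?addr0 => [|e /negbTE ->]; last exact: mul0rn.
  by rewrite mulr1n natz.
rewrite -(sum_pick (u, v)) -(sum_pick (v, u)) -sumrB.
by apply: eq_bigr => e _; rewrite mulrnBl.
Qed.

Lemma antisym_arc_decomposition (h : A -> A -> int) :
  (forall u v, h v u = - h u v) ->
  exists2 s : seq (A * A), all (fun e => 0 < h e.1 e.2) s &
    forall u v, h u v = \sum_(e <- s) arc_margin e u v.
Proof.
move=> hN; pose m e := if 0 < h e.1 e.2 then `|h e.1 e.2|%N else 0%N.
exists (flatten [seq nseq (m e) e | e <- enum {: A * A}]).
  apply/allP => e /flattenP [_ /mapP [e' _ ->] /nseqP [-> ]].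
  by rewrite /m; case: ifP.
move=> u v; rewrite big_flatten big_map big_enum /=.
under eq_bigr do rewrite big_nseq iter_addr_0.
rewrite sum_arc_margin /m /= hN.
by case: ltrgtP => h0; case: ltrgtP => //; lia.
Qed.

End Decomposition.

Lemma fishburn_bottom (A : finType) (p : pref A) x (X : {set A}) :
  (forall w, w != x -> p w x) -> X != [set x] -> fishburn p X [set x].
Proof.
move=> bottom Xx; split=> //.
split=> [w y /setDP [_] | w y wX /setDP [/set1P -> xX]].
  by rewrite in_set1 => wx /set1P ->; apply: bottom.
by apply: bottom; apply: contraNneq xX => <-.
Qed.

Section StrategyproofPairwise.
Variables (A : finType) (f : SCC A).
Hypotheses (f_pairwise : pairwise_scc f) (f_sp : strategyproof f).
Implicit Types (P R : profile A) (x : A).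
Local Open Scope ring_scope.

Lemma strategyproof_bottom R R' i x :
  voters R = voters R' -> i \in voters R ->
  (forall j, j \in voters R -> j != i -> same_pref (prefs R j) (prefs R' j)) ->
  (forall w, w != x -> prefs R i w x) ->
  f R = [set x] -> f R' = [set x].
Proof.
move=> vRR' iR others bottom fR; apply/eqP/negPn/negP => fR'.
by apply: (f_sp vRR' iR others); rewrite fR; apply: fishburn_bottom.
Qed.

Lemma singleton_arc_step P x a b : a != b -> b != x -> f P = [set x] ->
  exists2 Q, f Q = [set x] &
    forall u v, margin Q u v = margin P u v + arc_margin (a, b) u v *+ 2.
Proof.
move=> ab bx fP; pose s := top_pref x a b.
pose P1 := add_voter P s.
pose Q1 := add_voter P1 (rev_pref s).
pose Q2 := add_voter P1 (rev_pref (relabel_pref s (@perm_inj _ (tperm a b)))).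
have fQ1 : f Q1 = [set x].
  rewrite -fP; apply: f_pairwise => u v.
  by rewrite !margin_add_voter vote_rev addrA addNr add0r.
exists Q2.
  apply: (strategyproof_bottom (R := Q1) (i := fresh_voter P1)) fQ1 => //=.
  - exact: mem_head.
  - by move=> j _ /negbTE ->.
  - by move=> w; rewrite eqxx; apply: top_pref_top.
move=> u v; rewrite !margin_add_voter vote_rev addrA addrC; congr (_ + _).
by rewrite addrC; apply: vote_swap_adjacent (top_pref_adjacent ab bx) ab.
Qed.

Lemma singleton_arcs P x (s : seq (A * A)) :
  all (fun e => (e.1 != e.2) && (e.2 != x)) s -> f P = [set x] ->
  exists2 Q, f Q = [set x] &
    forall u v, margin Q u v = margin P u v + (\sum_(e <- s) arc_margin e u v) *+ 2.
Proof.
elim: s P => [|[a b] s IH] P /=; first by exists P => // u v; rewrite big_nil mul0rn addr0.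
case/andP => /andP [ab bx] s_ok fP.
have [P1 fP1 mP1] := singleton_arc_step ab bx fP.
have [Q fQ mQ] := IH P1 s_ok fP1.
by exists Q => // u v; rewrite mQ mP1 big_cons -addrA -mulrnDl.
Qed.

Hypothesis f_homog : homogeneous f.

Lemma homogeneous_iter_double n R : f (iter n (@double_profile A) R) = f R.
Proof. by elim: n => //= n IH; rewrite (f_homog (ltn0Sn 1) (double_profile_copies _)). Qed.

Lemma singleton_shift P x (h : A -> A -> int) : f P = [set x] ->
  (forall u v, h v u = - h u v) -> (forall v, 0 <= h x v) ->
  exists2 Q, f Q = [set x] & forall u v, margin Q u v = (margin P u v + h u v) *+ 2.
Proof.
move=> fP hN hx; have [s s_pos hs] := antisym_arc_decomposition hN.
have s_ok : all (fun e => (e.1 != e.2) && (e.2 != x)) s.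
  apply/allP => [[a b]] /(allP s_pos) /= hab; apply/andP; split.
    by apply: contraTneq hab => ->; have := hN b b; lia.
  by apply: contraTneq hab => ->; have := hN x a; have := hx a; lia.
have fP2 : f (double_profile P) = [set x].
  by rewrite (f_homog (ltn0Sn 1) (double_profile_copies P)).
have [Q fQ mQ] := singleton_arcs s_ok fP2.
by exists Q => // u v; rewrite mQ margin_double hs mulrnDl.
Qed.

End StrategyproofPairwise.

Lemma neutral_margin_invariant (A : finType) (f : SCC A) (Q : profile A)
    (pi : {perm A}) :
  pairwise_scc f -> neutral f ->
  (forall u v, margin Q (pi u) (pi v) = margin Q u v) -> pi @: f Q = f Q.
Proof.
move=> f_pairwise f_neutral piQ; pose Q' := relabel_profile Q pi^-1.
have <- : f Q' = pi @: f Q by apply: f_neutral => // i _ u v; rewrite /= !permK.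
by apply: f_pairwise => u v; rewrite margin_relabel -piQ !permKV.
Qed.

Section StrongCondorcet.
Variables (A : finType) (f : SCC A).
Hypotheses (f_pairwise : pairwise_scc f) (f_sp : strategyproof f) (f_homog : homogeneous f).
Local Open Scope ring_scope.

Lemma condorcet_winner_of_singleton (R : profile A) x :
  neutral f -> f R = [set x] -> condorcet_winner R x.
Proof.
move=> f_neutral fR y yx; rewrite ltNge; apply/negP => mxy.
pose pi := tperm x y; pose C := (size (voters R))%:Z.
pose chi w : int := (w \in [set x; y])%:R.
have chi_pi w : chi (pi w) = chi w.
  by rewrite /chi; case: tpermP => // ->; rewrite !in_set2 !eqxx orbT.
(* The target margins g_R + g_R o pi + (chi u - chi v) C are symmetric under pi,
   and C bounds every margin of R. *)
pose h u v := margin R (pi u) (pi v) + (chi u - chi v) * C.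
have hN u v : h v u = - h u v by rewrite /h margin_antisym; lia.
have hx v : 0 <= h x v.
  rewrite /h /pi tpermL /chi; case: tpermP => [->|->|/eqP vx /eqP vy];
    rewrite !in_set2 !eqxx ?orbT /=.
  - by rewrite margin_xx.
  - by rewrite margin_antisym; lia.
  rewrite (negbTE vx) (negbTE vy) /=.
  by have := margin_le_size R v y; rewrite margin_antisym; lia.
have [Q fQ mQ] := singleton_shift f_pairwise f_sp f_homog fR hN hx.
have piQ u v : margin Q (pi u) (pi v) = margin Q u v.
  by rewrite !mQ /h !tpermK !chi_pi addrCA.
have := neutral_margin_invariant f_pairwise f_neutral piQ.
by rewrite fQ imset_set1 /pi tpermL => /set1_inj yx'; rewrite yx' eqxx in yx.
Qed.

Lemma singleton_of_condorcet_winner (R : profile A) x :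
  non_imposing f -> condorcet_winner R x -> f R = [set x].
Proof.
move=> f_nonimp cw; have [R0 fR0] := f_nonimp x.
pose n0 := size (voters R0).
pose h u v := margin R u v *+ 2 ^ n0 - margin R0 u v.
have hN u v : h v u = - h u v.
  by rewrite /h !(margin_antisym _ u) mulNrn opprK opprB addrC.
have hx v : 0 <= h x v.
  rewrite /h; case: (eqVneq v x) => [->|vx]; first by rewrite !margin_xx mul0rn subrr.
  have := cw v vx; have := margin_le_size R0 x v; have := ltn_expl n0 (ltnSn 1).
  rewrite -/n0; nia.
have [Q fQ mQ] := singleton_shift f_pairwise f_sp f_homog fR0 hN hx.
rewrite -(homogeneous_iter_double f_homog n0.+1 R) -fQ; apply: f_pairwise => u v.
by rewrite margin_iter_double mQ /h addrC subrK expnSr mulrnA.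
Qed.

End StrongCondorcet.


Theorem lemma12 (A : finType) (f : SCC A) :
  is_SCC f -> pairwise_scc f -> strategyproof f -> non_imposing f ->
  homogeneous f -> neutral f ->
  strongly_condorcet_consistent f.
Proof.
move=> _ f_pairwise f_sp f_nonimp f_homog f_neutral R x; split.
  exact: condorcet_winner_of_singleton.
exact: singleton_of_condorcet_winner.
Qed.
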